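(* Fix an iteration $t$ and a slicing set $\mathcal U=\{u_i\}_{i=1}^m\subset\mathbb S^{d-1}$. Assume per-example gradients are $\ell_2$-clipped at radius $C>0$, the minibatch size $B_t\ge1$ is deterministic, and the slice-wise Lipschitz condition holds with constants $\{L_{t,i}\}_{i=1}^m$. Let $\overline K_t^2$ be a scalar such that for all $\theta\in\Theta$, $(s_i,s_j)\in\mathcal Q$, histories $y_{<t}$ in the support and couplings $\gamma\in\Pi(\mu^\theta_{s_i},\mu^\theta_{s_j})$, for $\gamma$-almost every $(X,X')$, $\mathbb E_{R_t}[K_t(X,X';R_t)^2]\le\overline K_t^2$. Then the vector $h^{\mathsf{sa}}_t=(h^{\mathsf{sa}}_{t,i})_{i=1}^m$ with \[ h^{\mathsf{sa}}_{t,i}:=\left(\frac{2L_{t,i}C}{B_t}\right)^2\overline K_t^2 \] is a valid subsampling-aware HUC (sa-HUC) for $\mathcal U$ at iteration $t$.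
   Context: Pufferfish scenario $(\mathcal S,\mathcal Q,\Theta)$: each $\theta\in\Theta$ is a joint law of a secret $S$ and a dataset $X=(X_1,\dots,X_n)\in\bar{\mathcal X}^n$; $\mu^\theta_s$ is the law of $X$ given $S=s$ under $\theta$; $\Pi(\mu,\nu)$ denotes couplings. At iteration $t$, subsampling randomness $R_t\sim\mathbb P_{\eta,\rho}$ (independent of data and secret) selects an index (multi)set $\mathsf I_t(R_t)\subseteq[n]$ of size $B_t$. A history $y_{<t}$ contains the parameter $\xi_{t-1}$. Clipped per-example gradients $\tilde g_t(x_j)=g_t(x_j)\min\{1,C/\|g_t(x_j)\|_2\}$ with $g_t(x_j)=\nabla_\xi\ell(\xi_{t-1};x_j)$; $\bar g_t(x;r)=\frac1{B_t}\sum_{j\in\mathsf I_t(r)}\tilde g_t(x_j)$; pre-noise update $f_t(x,y_{<t};r)=T_t(\bar g_t(x;r);y_{<t})$ with update map $T_t$. Discrepancy $K_t(x,x';r)=\sum_{j\in\mathsf I_t(r)}\mathbf 1\{x_j\ne x'_j\}$. Slice-wise Lipschitz condition: $|u_i^\top(T_t(z;y_{<t})-T_t(z';y_{<t}))|\le L_{t,i}|u_i^\top(z-z')|$ for all $z,z'$ and histories $y_{<t}$ in the support. sa-HUC: $h^{\mathsf{sa}}_t\in\mathbb R^m_+$ is an sa-HUC for $\mathcal U$ at iteration $t$ if for all $\theta\in\Theta$, $(s_i,s_j)\in\mathcal Q$, histories $y_{<t}$ in the support and every coupling $\gamma\in\Pi(\mu^\theta_{s_i},\mu^\theta_{s_j})$,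 for $\gamma$-almost every $(X,X')$ and all $i\in[m]$, $\mathbb E_{R_t}[|\langle f_t(X,y_{<t};R_t)-f_t(X',y_{<t};R_t),u_i\rangle|^2]\le h^{\mathsf{sa}}_{t,i}$, the expectation being only over $R_t\sim\mathbb P_{\eta,\rho}$. *)

From HB Require Import structures.
From mathcomp Require Import all_boot all_order all_algebra.
From mathcomp Require Import all_classical all_reals all_analysis.
Set Implicit Arguments. Unset Strict Implicit. Unset Printing Implicit Defensive.
Import Order.TTheory GRing.Theory Num.Theory.
Local Open Scope classical_set_scope.
Local Open Scope ring_scope.

Section SaHUC.
Variables (R : realType) (d : nat).

Definition dotv (u v : 'rV[R]_d) : R := \sum_(k < d) u ord0 k * v ord0 k.
Definition norm2 (v : 'rV[R]_d) : R := Num.sqrt (dotv v v).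
Definition on_sphere (u : 'rV[R]_d) : Prop := norm2 u = 1.

Definition clip (C : R) (g : 'rV[R]_d) : 'rV[R]_d :=
  Num.min 1 (C / norm2 g) *: g.

Variables (dX : measure_display) (Xbar : measurableType dX) (n : nat).
Variables (Hist : Type) (dO : measure_display) (Omega : measurableType dO).

(* ingredients of iteration t:
   xi    : history -> parameter xi_{t-1} contained in it
   gradl : xi -> x -> grad_xi loss(xi; x)   (per-example gradient)
   T     : update map T_t(z ; y_<t)
   I     : r -> index multiset I_t(r) (as a sequence) *)
Definition clipped_grad (C : R) (xi : Hist -> 'rV[R]_d)
  (gradl : 'rV[R]_d -> Xbar -> 'rV[R]_d) (y : Hist) (xj : Xbar) : 'rV[R]_d :=
  clip C (gradl (xi y) xj).

Definition minibatch_grad (C : R) (B : nat) (xi : Hist -> 'rV[R]_d)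
  (gradl : 'rV[R]_d -> Xbar -> 'rV[R]_d) (I : Omega -> seq 'I_n)
  (x : n.-tuple Xbar) (y : Hist) (r : Omega) : 'rV[R]_d :=
  (B%:R)^-1 *: \sum_(j <- I r) clipped_grad C xi gradl y (tnth x j).

Definition pre_noise_update (T : 'rV[R]_d -> Hist -> 'rV[R]_d) (C : R) (B : nat)
  (xi : Hist -> 'rV[R]_d) (gradl : 'rV[R]_d -> Xbar -> 'rV[R]_d)
  (I : Omega -> seq 'I_n) (x : n.-tuple Xbar) (y : Hist) (r : Omega)
  : 'rV[R]_d :=
  T (minibatch_grad C B xi gradl I x y r) y.

Definition discrepancy (I : Omega -> seq 'I_n) (x x' : n.-tuple Xbar)
  (r : Omega) : R :=
  \sum_(j <- I r) ((tnth x j != tnth x' j)%:R : R).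

Definition slicewise_lipschitz (m : nat) (u : 'I_m -> 'rV[R]_d) (L : 'I_m -> R)
  (T : 'rV[R]_d -> Hist -> 'rV[R]_d) (Hsupp : set Hist) : Prop :=
  forall i z z' y, Hsupp y ->
    `|dotv (u i) (T z y - T z' y)| <= L i * `|dotv (u i) (z - z')|.

Definition coupling (dD : measure_display) (D : measurableType dD)
  (mu nu : probability D R) (gamma : probability (D * D)%type R) : Prop :=
  forall A : set D, measurable A ->
    gamma (fst @^-1` A) = mu A /\ gamma (snd @^-1` A) = nu A.

(* sa-HUC: Pufferfish scenario given by the conditional laws
   mu theta s = law of X given S = s under theta, pairs Q,
   and the set Hsupp of histories in the support. *)
Definition is_saHUC (Theta S : Type) (Q : set (S * S)%type)
  (mu : Theta -> S -> probability (n.-tuple Xbar) R) (Hsupp : set Hist)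
  (P : probability Omega R) (f : n.-tuple Xbar -> Hist -> Omega -> 'rV[R]_d)
  (m : nat) (u : 'I_m -> 'rV[R]_d) (h : 'I_m -> R) : Prop :=
  (forall i, 0 <= h i) /\
  forall (theta : Theta) (si sj : S), Q (si, sj) ->
  forall y, Hsupp y ->
  forall gamma : probability (n.-tuple Xbar * n.-tuple Xbar)%type R,
    coupling (mu theta si) (mu theta sj) gamma ->
    {ae gamma, forall XX' : n.-tuple Xbar * n.-tuple Xbar,
      forall i : 'I_m,
        (\int[P]_r ((`|dotv (u i) (f XX'.1 y r - f XX'.2 y r)| ^+ 2)%:E)
          <= (h i)%:E)%E}.

End SaHUC.
Arguments discrepancy {R dX Xbar n dO Omega}.

From HB Require Import structures.
From mathcomp Require Import all_boot all_order all_algebra.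
From mathcomp Require Import all_classical all_reals all_analysis.
From mathcomp Require Import ring lra measurable_realfun.
Set Implicit Arguments. Unset Strict Implicit. Unset Printing Implicit Defensive.
Import Order.TTheory GRing.Theory Num.Theory.
Local Open Scope classical_set_scope.
Local Open Scope ring_scope.

(* Along a unit direction u, a clipped gradient has component at most C
   (Cauchy-Schwarz), so two minibatch averages differ along u by at most
   2C/B times the number K of sampled positions where the two datasets
   disagree; the slice-wise Lipschitz condition multiplies this by |L_i|.
   Squaring and integrating over the subsampling randomness bounds the second
   moment by (2 L_i C / B)^2 E[K^2], which is at most (2 L_i C / B)^2 Kbar^2
   on the gamma-full set where the hypothesis on K holds. *)

Section DotProduct.
Variables (R : realType) (d : nat).
Implicit Types u v w : 'rV[R]_d.

Lemma dotvC u v : dotv u v = dotv v u.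
Proof. by apply: eq_bigr => k _; rewrite mulrC. Qed.

Lemma dotv0 u : dotv u 0 = 0.
Proof. by rewrite /dotv big1 // => k _; rewrite mxE mulr0. Qed.

Lemma dotvB u v w : dotv u (v - w) = dotv u v - dotv u w.
Proof. by rewrite /dotv -sumrB; apply: eq_bigr => k _; rewrite !mxE mulrBr. Qed.

Lemma dotvZ u a v : dotv u (a *: v) = a * dotv u v.
Proof. by rewrite /dotv mulr_sumr; apply: eq_bigr => k _; rewrite !mxE mulrCA. Qed.

Lemma dotv_sum (I : Type) u (s : seq I) (F : I -> 'rV[R]_d) :
  dotv u (\sum_(j <- s) F j) = \sum_(j <- s) dotv u (F j).
Proof.
by rewrite /dotv exchange_big; apply: eq_bigr => k _; rewrite summxE mulr_sumr.
Qed.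

Lemma dotvv_ge0 v : 0 <= dotv v v.
Proof. by rewrite sumr_ge0 // => k _; rewrite -expr2 sqr_ge0. Qed.

Lemma norm_dotv_le_norm2 u v : on_sphere u -> `|dotv u v| <= norm2 v.
Proof.
move=> hu; set a := dotv u v.
have uu : dotv u u = 1.
  by move/(congr1 (fun x => x ^+ 2)): hu; rewrite sqr_sqrtr ?dotvv_ge0 ?expr1n.
(* the squared length of the component of v orthogonal to u is vv - a^2 *)
have := dotvv_ge0 (v - a *: u).
rewrite dotvB dotvZ (dotvC (v - _) v) (dotvC (v - _) u) !dotvB !dotvZ uu.
rewrite (dotvC v u) -/a => orth_ge0.
rewrite -ler_sqr ?nnegrE ?sqrtr_ge0 // sqr_sqrtr ?dotvv_ge0 // real_normK ?num_real //.
nra.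
Qed.

Lemma norm_dotv_clip_le u C g : on_sphere u -> 0 <= C ->
  `|dotv u (clip C g)| <= C.
Proof.
move=> hu C0; rewrite /clip dotvZ normrM.
have k0 : 0 <= Num.min 1 (C / norm2 g) by rewrite le_min ler01 divr_ge0 ?sqrtr_ge0.
rewrite (ger0_norm k0); apply: le_trans (ler_wpM2l k0 (norm_dotv_le_norm2 g hu)) _.
have [->|g_neq0] := eqVneq (norm2 g) 0; first by rewrite mulr0.
apply: (@le_trans _ _ (C / norm2 g * norm2 g)); last by rewrite divfK.
by rewrite ler_wpM2r ?sqrtr_ge0 // ge_min lexx orbT.
Qed.

End DotProduct.

Section Minibatch.
Variables (R : realType) (d : nat).
Variables (dX : measure_display) (Xbar : measurableType dX) (n : nat).
Variables (Hist : Type) (dO : measure_display) (Omega : measurableType dO).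
Variables (C : R) (B : nat) (xi : Hist -> 'rV[R]_d).
Variables (gradl : 'rV[R]_d -> Xbar -> 'rV[R]_d) (I : Omega -> seq 'I_n).
Hypothesis C_ge0 : 0 <= C.

Lemma norm_dotv_clipped_gradB_le u y (a b : Xbar) : on_sphere u ->
  `|dotv u (clipped_grad C xi gradl y a - clipped_grad C xi gradl y b)|
    <= 2 * C * (a != b)%:R.
Proof.
move=> hu; have [->|_] := eqVneq a b; first by rewrite subrr dotv0 normr0 mulr0.
rewrite mulr1 mulr2n mulrDl mul1r dotvB.
by apply: le_trans (ler_normB _ _) _; rewrite lerD ?norm_dotv_clip_le.
Qed.

(* No lower bound on B is needed: for B = 0 both sides vanish as 0^-1 = 0. *)
Lemma norm_dotv_minibatch_gradB_le u (x x' : n.-tuple Xbar) y r : on_sphere u ->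
  `|dotv u (minibatch_grad C B xi gradl I x y r
            - minibatch_grad C B xi gradl I x' y r)|
    <= 2 * C / B%:R * discrepancy I x x' r.
Proof.
move=> hu; rewrite /minibatch_grad -scalerBr dotvZ -sumrB dotv_sum normrM.
rewrite ger0_norm ?invr_ge0 ?ler0n // mulrC mulrAC.
apply: ler_wpM2r; first by rewrite invr_ge0 ler0n.
apply: le_trans (ler_norm_sum _ _ _) _.
by rewrite /discrepancy mulr_sumr ler_sum // => j _; apply: norm_dotv_clipped_gradB_le.
Qed.

Lemma sqr_norm_dotv_pre_noise_updateB_le (T : 'rV[R]_d -> Hist -> 'rV[R]_d)
    (Hsupp : set Hist) m (u : 'I_m -> 'rV[R]_d) (L : 'I_m -> R) i
    (x x' : n.-tuple Xbar) y r :
  slicewise_lipschitz u L T Hsupp -> Hsupp y -> on_sphere (u i) ->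
  `|dotv (u i) (pre_noise_update T C B xi gradl I x y r
                - pre_noise_update T C B xi gradl I x' y r)| ^+ 2
    <= (2 * L i * C / B%:R) ^+ 2 * discrepancy I x x' r ^+ 2.
Proof.
move=> hL hy hu; rewrite /pre_noise_update.
set g := minibatch_grad C B xi gradl I.
have lip := hL i (g x y r) (g x' y r) y hy.
have mb := norm_dotv_minibatch_gradB_le x x' y r hu.
have rhs_ge0 := mulr_ge0 (normr_ge0 (L i)) (le_trans (normr_ge0 _) mb).
have -> : (2 * L i * C / B%:R) ^+ 2 * discrepancy I x x' r ^+ 2
          = (`|L i| * (2 * C / B%:R * discrepancy I x x' r)) ^+ 2.
  by rewrite [RHS]exprMn real_normK ?num_real //; ring.
rewrite lerXn2r ?nnegrE //.
apply: le_trans lip _.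
apply: le_trans (ler_wpM2r (normr_ge0 _) (ler_norm _)) _.
exact: ler_wpM2l.
Qed.

End Minibatch.

(* Unlike [ge0_le_integral], no measurability is required (the integrand of an
   sa-HUC need not be measurable): a nonnegative integral is a supremum over
   the simple functions below the integrand. *)
Lemma ge0_le_integralT d0 (T : measurableType d0) (R : realType)
    (mu : {measure set T -> \bar R}) (f g : T -> \bar R) :
  (forall x, (0 <= f x)%E) -> (forall x, (f x <= g x)%E) ->
  (\int[mu]_x f x <= \int[mu]_x g x)%E.
Proof.
move=> f0 fg; have g0 x := le_trans (f0 x) (fg x).
rewrite !ge0_integralTE //; apply: ge_ereal_sup => _ [h hf <-].
by apply: ereal_sup_ubound; exists h => //= x; apply: le_trans (hf x) (fg x).
Qed.

Lemma measurable_fun_countable_comp d0 d1 (T : measurableType d0)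
    (U : measurableType d1) (K : countType) (f : T -> K) (F : K -> U) :
  (forall k, measurable (f @^-1` [set k])) -> measurable_fun setT (F \o f).
Proof.
move=> mf _ A _; rewrite setTI.
have -> : (F \o f) @^-1` A = \bigcup_(k in [set k | A (F k)]) f @^-1` [set k].
  by apply/seteqP; split=> [t Aft | t [k AFk /= ->]] //; exists (f t).
rewrite bigcup_mkcond; apply: countable_bigcupT_measurable => [|k].
  exact: countableP.
by case: ifP => _; [exact: mf | exact: measurable0].
Qed.

Theorem proposition3 (R : realType) (d : nat)
  (dX : measure_display) (Xbar : measurableType dX) (n : nat)
  (Hist : Type) (dO : measure_display) (Omega : measurableType dO)
  (Theta S : Type) (Q : set (S * S)%type)
  (mu : Theta -> S -> probability (n.-tuple Xbar) R) (Hsupp : set Hist)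
  (P : probability Omega R) (I : Omega -> seq 'I_n) (B : nat)
  (C : R) (xi : Hist -> 'rV[R]_d) (gradl : 'rV[R]_d -> Xbar -> 'rV[R]_d)
  (T : 'rV[R]_d -> Hist -> 'rV[R]_d)
  (m : nat) (u : 'I_m -> 'rV[R]_d) (L : 'I_m -> R) (Kbar : R) :
  (forall i, on_sphere (u i)) ->
  0 < C ->
  (1 <= B)%N ->
  (forall r, size (I r) = B) ->
  (forall s : seq 'I_n, measurable (I @^-1` [set s])) ->
  slicewise_lipschitz u L T Hsupp ->
  (forall (theta : Theta) (si sj : S), Q (si, sj) ->
   forall y, Hsupp y ->
   forall gamma : probability (n.-tuple Xbar * n.-tuple Xbar)%type R,
     coupling (mu theta si) (mu theta sj) gamma ->
     {ae gamma, forall XX' : n.-tuple Xbar * n.-tuple Xbar,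
       (\int[P]_r ((discrepancy I XX'.1 XX'.2 r) ^+ 2)%:E <= (Kbar ^+ 2)%:E)%E}) ->
  is_saHUC Q mu Hsupp P (pre_noise_update T C B xi gradl I) u
    (fun i => (2 * L i * C / B%:R) ^+ 2 * Kbar ^+ 2).
Proof.
move=> hu /ltW C_ge0 _ _ hI hL hK.
split=> [i|theta si sj hQ y hy gamma hgamma]; first by rewrite mulr_ge0 ?sqr_ge0.
apply: filterS (hK theta si sj hQ y hy gamma hgamma) => -[x x'] /= hKbar i.
set c := (2 * L i * C / B%:R) ^+ 2; have c_ge0 : 0 <= c := sqr_ge0 _.
pose K2 r : \bar R := (discrepancy I x x' r ^+ 2)%:E.
apply: le_trans (@ge0_le_integralT _ _ _ P _ (fun r => c%:E * K2 r)%E _ _) _ => [r|r|].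
- by rewrite lee_fin sqr_ge0.
- rewrite -EFinM lee_fin.
  exact: (sqr_norm_dotv_pre_noise_updateB_le _ _ _ _ C_ge0 _ _ _ hL hy (hu i)).
have mK2 : measurable_fun setT K2.
  exact: (measurable_fun_countable_comp
    (fun s => ((\sum_(j <- s) ((tnth x j != tnth x' j)%:R : R)) ^+ 2)%:E) hI).
rewrite ge0_integralZl_EFin // ?EFinM ?lee_wpmul2l ?lee_fin //.
by move=> r _; rewrite lee_fin sqr_ge0.
Qed.
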